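(* Consider the classical four-stage fourth-order Runge--Kutta method, with $a_{21}=\frac12$, $a_{32}=\frac12$, $a_{43}=1$, all other $a_{ij}=0$, and $b=(\frac16,\frac13,\frac13,\frac16)$. There is no $\gamma>0$ such that this method preserves positivity for all problems of the form $$u_k'(t)=q_k(u(t),t)\,\frac{u_{k-1}(t)-u_k(t)}{\Delta x},\quad k=1,\dots,N,\qquad u_0:=u_N,\qquad u_k(t_0)=u_k^0\ge0,$$ with nonnegative $q_k$, under the step-size restriction $0\le\Delta t\,q_k(u,t)/\Delta x\le\gamma$ for all $k,u,t$; that is, for every $\gamma>0$ there is such a problem and such a step size for which the method yields a negative solution value.
   Context: Applying an explicit Runge--Kutta method with strictly lower-triangular $A=(a_{ij})$, weights $b$ and nodes $c_i=\sum_ja_{ij}$ to this system with step $\Delta t$ means: $y^i_k=u^n_k+\sum_{j<i}a_{ij}\xi^j_k(y^j_{k-1}-y^j_k)$, $u^{n+1}_k=u^n_k+\sum_ib_i\xi^i_k(y^i_{k-1}-y^i_k)$, with $\xi^j_k=\frac{\Delta t}{\Delta x}q_k(y^j,t_n+c_j\Delta t)$ and periodic indices ($y_0:=y_N$). *)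

From mathcomp Require Import all_boot all_order all_algebra.
From mathcomp Require Import reals.
Set Implicit Arguments. Unset Strict Implicit. Unset Printing Implicit Defensive.
Import Order.TTheory GRing.Theory Num.Theory.
Local Open Scope ring_scope.

Section RK.
Variable R : realType.
Variable N : nat.
(* Grid indices: ordinal k : 'I_N.+1 stands for the paper's index k+1,
   so the paper's N grid points are 'I_N.+1 (i.e. the paper's N is N.+1 here). *)
Definition state := 'I_N.+1 -> R.

(* periodic predecessor: paper's u_{k-1} with u_0 := u_N *)
Definition prevI (k : 'I_N.+1) : 'I_N.+1 := inord ((k + N) %% N.+1)%N.

Definition incr (q : 'I_N.+1 -> state -> R -> R) (dt dx : R) (y : state) (t : R)
  : state := fun k => dt / dx * q k y t * (y (prevI k) - y k).

(* explicit RK method with tableau A (strictly lower triangular, 0-based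
   stage indices), weights b, s stages *)
Variables (A : nat -> nat -> R) (b : nat -> R) (s : nat).
Definition node (j : nat) : R := \sum_(l < j) A j l.

Fixpoint stages (q : 'I_N.+1 -> state -> R -> R) (dt dx tn : R) (u : state)
  (i : nat) : seq state :=
  match i with
  | 0 => [::]
  | i'.+1 =>
      let ys := stages q dt dx tn u i' in
      rcons ys (fun k => u k + \sum_(j < i') A i' j *
                 incr q dt dx (nth u ys j) (tn + node j * dt) k)
  end.

Definition rk_step q dt dx tn (u : state) : state :=
  let ys := stages q dt dx tn u s in
  fun k => u k + \sum_(j < s) b j * incr q dt dx (nth u ys j) (tn + node j * dt) k.

Fixpoint rk_sol q dt dx t0 (u0 : state) (n : nat) : state :=
  match n with
  | 0 => u0
  | n'.+1 => rk_step q dt dx (t0 + n'%:R * dt) (rk_sol q dt dx t0 u0 n')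
  end.
End RK.

Definition rk4A (R : realType) (i j : nat) : R :=
  match i, j with
  | 1, 0 => 1 / 2
  | 2, 1 => 1 / 2
  | 3, 2 => 1
  | _, _ => 0
  end.
Definition rk4b (R : realType) (j : nat) : R :=
  match j with
  | 0 => 1 / 6
  | 1 => 1 / 3
  | 2 => 1 / 3
  | 3 => 1 / 6
  | _ => 0
  end.

(* Let the speed depend on time: q = gamma everywhere except at the midpoint
   time t_n + dt/2 of the two middle RK4 stages, where only cell 2 moves.  Take
   dt = dx = 1 and a unit pulse in cell 0.  The second stage puts gamma/2 into
   cell 1 and the third passes gamma^2/4 on into cell 2.  The fourth stage adds
   to u^n (zero on cell 2) the flux of the third stage, whose cell 1 is still
   empty: it equals -gamma^3/4 on cell 2.  Cell 3 only receives the flux of the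
   last stage, so there u^1 = gamma * (-gamma^3/4) / 6 = -gamma^4/24 < 0, for
   every gamma > 0. *)
From mathcomp Require Import all_boot all_order all_algebra.
From mathcomp Require Import reals.
From Stdlib Require Import FunctionalExtensionality.
From mathcomp Require Import ring.
Set Implicit Arguments. Unset Strict Implicit. Unset Printing Implicit Defensive.
Import Order.TTheory GRing.Theory Num.Theory.
Local Open Scope ring_scope.

Lemma prevI_val (N : nat) (k : 'I_N.+1) : val (prevI k) = ((k + N) %% N.+1)%N.
Proof. by rewrite /prevI /= inordK // ltn_mod. Qed.

Lemma stagesS (R : realType) (N : nat) (A : nat -> nat -> R) q dt dx tn
    (u : state R N) i :
  stages A q dt dx tn u i.+1 =
  rcons (stages A q dt dx tn u i)
    (fun k => u k + \sum_(j < i) A i j *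
       incr q dt dx (nth u (stages A q dt dx tn u i) j) (tn + node A j * dt) k).
Proof. by []. Qed.

Section RK4Step.
Variables (R : realType) (N : nat) (q : 'I_N.+1 -> state R N -> R -> R).
Variables (dt dx tn : R) (u : state R N).

Lemma rk4_nodes :
  [/\ node (@rk4A R) 0 = 0, node (@rk4A R) 1 = 1 / 2,
      node (@rk4A R) 2 = 1 / 2 & node (@rk4A R) 3 = 1].
Proof. by rewrite /node !big_ord_recr !big_ord0 /= /rk4A ?add0r ?addr0. Qed.

Definition rk4_stage2 : state R N := fun k => u k + 1 / 2 * incr q dt dx u tn k.
Definition rk4_stage3 : state R N :=
  fun k => u k + 1 / 2 * incr q dt dx rk4_stage2 (tn + dt / 2) k.
Definition rk4_stage4 : state R N :=
  fun k => u k + incr q dt dx rk4_stage3 (tn + dt / 2) k.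

Lemma rk4_stagesE :
  stages (@rk4A R) q dt dx tn u 4 = [:: u; rk4_stage2; rk4_stage3; rk4_stage4].
Proof.
have [c0 c1 c2 _] := rk4_nodes.
have e1 : stages (@rk4A R) q dt dx tn u 1 = [:: u].
  rewrite stagesS; congr rcons; apply: functional_extensionality => k.
  by rewrite big_ord0 addr0.
have e2 : stages (@rk4A R) q dt dx tn u 2 = [:: u; rk4_stage2].
  rewrite stagesS e1; congr rcons; apply: functional_extensionality => k.
  by rewrite big_ord_recr big_ord0 /= add0r c0 mul0r addr0.
have e3 : stages (@rk4A R) q dt dx tn u 3 = [:: u; rk4_stage2; rk4_stage3].
  rewrite stagesS e2; congr rcons; apply: functional_extensionality => k.
  by rewrite /rk4_stage3 !big_ord_recr big_ord0 /= c0 c1 mul0r !add0r [_ * dt]mulrC !mul1r.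
rewrite stagesS e3; congr rcons; apply: functional_extensionality => k.
by rewrite /rk4_stage4 !big_ord_recr big_ord0 /= c2 !mul0r !add0r mul1r [_ * dt]mulrC !mul1r.
Qed.

Lemma rk4_stepE k :
  rk_step (@rk4A R) (@rk4b R) 4 q dt dx tn u k =
  u k + (incr q dt dx u tn k + 2 * incr q dt dx rk4_stage2 (tn + dt / 2) k
         + 2 * incr q dt dx rk4_stage3 (tn + dt / 2) k
         + incr q dt dx rk4_stage4 (tn + dt) k) / 6.
Proof.
have [c0 c1 c2 c3] := rk4_nodes.
rewrite /rk_step rk4_stagesE !big_ord_recr big_ord0 /= c0 c1 c2 c3.
rewrite mul0r addr0 [_ * dt]mulrC !mul1r.
by field.
Qed.
End RK4Step.

Lemma incr_unit_mesh (R : realType) (N : nat) q (y : state R N) t k :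
  incr q 1 1 y t k = q k y t * (y (prevI k) - y k).
Proof. by rewrite /incr divr1 mul1r. Qed.

Section GatedTransport.
Variables (R : realType) (gamma : R).

Definition gated_speed (k : 'I_4) (y : state R 3) (t : R) : R :=
  if t == 1 / 2 then (if val k == 2 then gamma else 0) else gamma.

Definition unit_pulse : state R 3 := fun k => if val k == 0 then 1 else 0.

Lemma gated_speed_bounds k y t :
  0 < gamma -> 0 <= gated_speed k y t <= gamma.
Proof.
by move=> g0; rewrite /gated_speed; do !case: ifP => _; rewrite ?lexx ?(ltW g0).
Qed.

Let half_neq0 : (1 / 2 : R) != 0.
Proof. by rewrite mul1r invr_eq0 pnatr_eq0. Qed.

Let half_neq1 : (1 / 2 : R) != 1.
Proof. by rewrite mul1r invr_eq1 pnatr_eq1. Qed.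

Notation y2 := (rk4_stage2 gated_speed 1 1 0 unit_pulse).
Notation y3 := (rk4_stage3 gated_speed 1 1 0 unit_pulse).
Notation y4 := (rk4_stage4 gated_speed 1 1 0 unit_pulse).

Lemma gated_speed_at_start k y : gated_speed k y 0 = gamma.
Proof. by rewrite /gated_speed eq_sym (negbTE half_neq0). Qed.

Lemma gated_speed_at_mid k y :
  gated_speed k y (0 + 1 / 2) = if val k == 2 then gamma else 0.
Proof. by rewrite /gated_speed add0r eqxx. Qed.

Lemma gated_speed_at_end k y : gated_speed k y (0 + 1) = gamma.
Proof. by rewrite /gated_speed add0r eq_sym (negbTE half_neq1). Qed.

Lemma gated_stage2E k :
  y2 k = if val k == 0 then 1 - gamma / 2 else if val k == 1 then gamma / 2 else 0.
Proof.
rewrite /rk4_stage2 incr_unit_mesh gated_speed_at_start /unit_pulse prevI_val.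
by case: k => [[|[|[|[|?]]]] ?] //=; ring.
Qed.

Lemma gated_stage3E k :
  y3 k = if val k == 0 then 1 else if val k == 2 then gamma ^+ 2 / 4 else 0.
Proof.
rewrite /rk4_stage3 incr_unit_mesh gated_speed_at_mid !gated_stage2E /unit_pulse prevI_val.
by case: k => [[|[|[|[|?]]]] ?] //=; field.
Qed.

Lemma gated_stage4E k :
  y4 k = if val k == 0 then 1 else if val k == 2 then - (gamma ^+ 3 / 4) else 0.
Proof.
rewrite /rk4_stage4 incr_unit_mesh gated_speed_at_mid !gated_stage3E /unit_pulse prevI_val.
by case: k => [[|[|[|[|?]]]] ?] //=; field.
Qed.

Lemma gated_rk4_step_cell3 :
  rk_step (@rk4A R) (@rk4b R) 4 gated_speed 1 1 0 unit_pulse (@Ordinal 4 3 isT) =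
  - (gamma ^+ 4 / 24).
Proof.
rewrite rk4_stepE !incr_unit_mesh gated_speed_at_start !gated_speed_at_mid.
rewrite gated_speed_at_end !gated_stage4E /unit_pulse prevI_val /=.
by field.
Qed.
End GatedTransport.

Theorem proposition8 (R : realType) (gamma : R) :
  0 < gamma ->
  exists (N : nat) (dx dt t0 : R)
         (q : 'I_N.+1 -> state R N -> R -> R) (u0 : state R N),
    (0 < dx /\ 0 < dt) /\
    [/\
        (forall k u t, 0 <= q k u t),
        (forall k u t, 0 <= dt * q k u t / dx <= gamma),
        (forall k, 0 <= u0 k) &
        (exists (n : nat) (k : 'I_N.+1),
          rk_sol (@rk4A R) (@rk4b R) 4 q dt dx t0 u0 n k < 0)].
Proof.
move=> gamma_gt0.
exists 3%N, 1, 1, 0, (gated_speed gamma), (unit_pulse R).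
split; first by rewrite ltr01.
split.
- by move=> k u t; case/andP: (gated_speed_bounds k u t gamma_gt0).
- by move=> k u t; rewrite mul1r divr1 gated_speed_bounds.
- by move=> k; rewrite /unit_pulse; case: ifP.
exists 1%N, (@Ordinal 4 3 isT).
rewrite /= mul0r addr0 gated_rk4_step_cell3 oppr_lt0.
by rewrite divr_gt0 ?exprn_gt0.
Qed.
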